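(* Let $G$ be a commutative group and $f_1,f_2$ bijections of $G$ such that $G(f_1)$, $G(f_2)$ are not groups. (i) If $f_1,f_2$ are conjugate in $\mathrm{Aut}(G)$ (i.e., $f_2=\psi f_1\psi^{-1}$ for some $\psi\in\mathrm{Aut}(G)$), then $G(f_1)\cong G(f_2)$. (ii) If $f_1(1)=1=f_2(1)$, then $G(f_1)\cong G(f_2)$ if and only if $f_1,f_2$ are conjugate in $\mathrm{Aut}(G)$. (iii) If $f_2\in\mathrm{Aut}(G)$, $t$ is a square in $G$, and $f_1(x)=f_2(x)t$ for every $x\in G$, then $G(f_1)\cong G(f_2)$.
   Context: Construction $G(f)$: for a commutative group $G$ (written multiplicatively) and a bijection $f:G\to G$, let $\overline{G}=\{\overline{x}:x\in G\}$ be a disjoint copy of $G$, and let $G(f)$ be the set $G\cup\overline{G}$ with multiplication $*$ defined for $x,y\in G$ by $x*y=xy$, $x*\overline{y}=\overline{xy}$, $\overline{x}*y=\overline{xy}$, $\overline{x}*\overline{y}=f(xy)$. It is a commutative loop with neutral element $1$. *)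

Set Implicit Arguments.

Record CommGroup := {
  carrier :> Type;
  gmul : carrier -> carrier -> carrier;
  gone : carrier;
  ginv : carrier -> carrier;
  gmul_assoc : forall x y z, gmul x (gmul y z) = gmul (gmul x y) z;
  gmul_comm : forall x y, gmul x y = gmul y x;
  gmul_1l : forall x, gmul gone x = x;
  gmul_Vl : forall x, gmul (ginv x) x = gone
}.

Definition bijective {A B : Type} (f : A -> B) : Prop :=
  exists g : B -> A, (forall x, g (f x) = x) /\ (forall y, f (g y) = y).

Definition is_aut {G : CommGroup} (psi : G -> G) : Prop :=
  bijective psi /\ forall x y, psi (gmul G x y) = gmul G (psi x) (psi y).

(* f1, f2 conjugate in Aut(G): f2 = psi f1 psi^-1 for some psi in Aut(G),
   written equivalently as f2 o psi = psi o f1. *)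
Definition conj_in_aut {G : CommGroup} (f1 f2 : G -> G) : Prop :=
  exists psi : G -> G, @is_aut G psi /\ forall x, f2 (psi x) = psi (f1 x).

(* The construction G(f): carrier G + Gbar, inl x = x, inr x = xbar. *)
Definition Gf_mul {G : CommGroup} (f : G -> G) (a b : G + G) : G + G :=
  match a, b with
  | inl x, inl y => inl (gmul G x y)
  | inl x, inr y => inr (gmul G x y)
  | inr x, inl y => inr (gmul G x y)
  | inr x, inr y => inl (f (gmul G x y))
  end.

Definition magma_is_group {T : Type} (op : T -> T -> T) : Prop :=
  (forall a b c, op a (op b c) = op (op a b) c) /\
  exists e : T, (forall a, op e a = a /\ op a e = a) /\
    forall a, exists b, op a b = e /\ op b a = e.

Definition magma_iso {T U : Type} (opT : T -> T -> T) (opU : U -> U -> U)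
  (phi : T -> U) : Prop :=
  bijective phi /\ forall a b, phi (opT a b) = opU (phi a) (phi b).

Definition magma_isomorphic {T U : Type} (opT : T -> T -> T) (opU : U -> U -> U) : Prop :=
  exists phi : T -> U, magma_iso opT opU phi.


(* Write xbar for the element [inr x] of G(f) = G + Gbar.
   (i)   An automorphism psi with f2 o psi = psi o f1 lifts to the
         isomorphism x |-> psi x, xbar |-> (psi x)bar.
   (iii) If f2 is a homomorphism and t = f2 (c c), then x |-> x,
         xbar |-> (x c)bar is an isomorphism G(f2 . t) -> G(f2); when t = s s
         one takes c = f2^-1 s.
   (ii)  Conversely, the key structural fact is that an isomorphism onto a
         G(f) that is not a group maps G into G: otherwise some xbar would
         have a left "inverse" a', i.e. xbar (a' b) = b for all b, which
         forces f to be a translation z |-> c z, and then G(f) is a group.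
         Applying this to phi and phi^-1, phi maps G onto G and Gbar onto
         Gbar, so phi (inl x) = inl (psi x), phi (inr x) = inr (chi x) with
         psi an automorphism and chi x = psi x k.  From f1 1 = 1 = f2 1 and
         injectivity of f2 one gets k k = 1, whence f2 o psi = psi o f1. *)

Section CommGroupFacts.
Variable G : CommGroup.
Local Notation "x ** y" := (gmul G x y) (at level 40, left associativity).

Lemma gmul_1r (x : G) : x ** gone G = x.
Proof. rewrite gmul_comm; apply gmul_1l. Qed.

Lemma gmul_Vr (x : G) : x ** ginv G x = gone G.
Proof. rewrite gmul_comm; apply gmul_Vl. Qed.

Lemma gmul_CA (x y z : G) : x ** (y ** z) = y ** (x ** z).
Proof. rewrite !gmul_assoc, (gmul_comm G x y); reflexivity. Qed.

Lemma gmul_cancel_l (x y z : G) : x ** y = x ** z -> y = z.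
Proof.
  intro H. rewrite <- (gmul_1l G y), <- (gmul_1l G z), <- (gmul_Vl G x),
    <- !gmul_assoc, H; reflexivity.
Qed.

Definition strip (a : G + G) : G := match a with inl y => y | inr y => y end.

End CommGroupFacts.
Arguments strip {G} a.

Section NonGroupCriterion.
Variables (G : CommGroup) (f : G -> G).
Local Notation "x ** y" := (gmul G x y) (at level 40, left associativity).

Lemma Gf_translation_group (c : G) :
  (forall z, f z = c ** z) -> magma_is_group (Gf_mul f).
Proof.
  intro Hf. split.
  - intros [x|x] [y|y] [z|z]; simpl; rewrite ?Hf, ?gmul_assoc; try reflexivity;
      f_equal; rewrite <- ?gmul_assoc; apply gmul_CA.
  - exists (inl (gone G)). split.
    + intros [x|x]; simpl; rewrite gmul_1l, gmul_1r; auto.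
    + intros [x|x].
      * exists (inl (ginv G x)); simpl; rewrite gmul_Vl, gmul_Vr; auto.
      * exists (inr (ginv G x ** ginv G c)); simpl; rewrite !Hf; split; f_equal.
        -- rewrite (gmul_assoc G x), gmul_Vr, gmul_1l, gmul_Vr; reflexivity.
        -- rewrite (gmul_comm G _ x), (gmul_assoc G x), gmul_Vr, gmul_1l, gmul_Vr;
             reflexivity.
Qed.

Lemma Gf_group_of_bar_section (x : G) :
  (exists a', forall b, Gf_mul f (inr x) (Gf_mul f a' b) = b) ->
  magma_is_group (Gf_mul f).
Proof.
  intros [[w|w] Hsec].
  - specialize (Hsec (inl (gone G))). discriminate Hsec.
  - apply (Gf_translation_group (ginv G (x ** w))). intro z.
    specialize (Hsec (inl (ginv G (x ** w) ** z))). simpl in Hsec.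
    injection Hsec as Hsec. rewrite <- Hsec. f_equal.
    rewrite !gmul_assoc, gmul_Vr, gmul_1l; reflexivity.
Qed.

End NonGroupCriterion.

Lemma magma_iso_inv {T U : Type} (opT : T -> T -> T) (opU : U -> U -> U) phi :
  magma_iso opT opU phi -> exists g, magma_iso opU opT g /\
    (forall a, g (phi a) = a) /\ (forall b, phi (g b) = b).
Proof.
  intros [[g [Hgphi Hphig]] Hm]. exists g. split; [|split; assumption].
  split.
  - exists phi; split; assumption.
  - intros a b. rewrite <- (Hphig a), <- (Hphig b), <- Hm, !Hgphi; reflexivity.
Qed.

(* An isomorphism onto a G(f2) which is not a group maps G into G: the image
   ybar of an element u of G would have the section b |-> phi(u^-1) b. *)
Lemma Gf_iso_maps_G (G : CommGroup) (f1 f2 : G -> G) phi :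
  ~ magma_is_group (Gf_mul f2) -> magma_iso (Gf_mul f1) (Gf_mul f2) phi ->
  forall u, phi (inl u) = inl (strip (phi (inl u))).
Proof.
  intros hng [[g [_ Hphig]] Hm] u.
  destruct (phi (inl u)) as [y|y] eqn:E; [reflexivity|].
  exfalso; apply hng, (@Gf_group_of_bar_section G f2 y).
  exists (phi (inl (ginv G u))). intro b.
  rewrite <- (Hphig b), <- E, <- !Hm. f_equal.
  destruct (g b); simpl; rewrite gmul_assoc, gmul_Vr, gmul_1l; reflexivity.
Qed.

Section Isomorphisms.
Variables (G : CommGroup) (f1 f2 : G -> G).
Local Notation "x ** y" := (gmul G x y) (at level 40, left associativity).

Lemma Gf_iso_of_conj : conj_in_aut f1 f2 -> magma_isomorphic (Gf_mul f1) (Gf_mul f2).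
Proof.
  intros [psi [[[psi_inv [Hl Hr]] Hm] Hc]].
  exists (fun a => match a with inl x => inl (psi x) | inr x => inr (psi x) end).
  split.
  - exists (fun a => match a with inl x => inl (psi_inv x) | inr x => inr (psi_inv x) end).
    split; intros [x|x]; rewrite ?Hl, ?Hr; reflexivity.
  - intros [x|x] [y|y]; simpl; rewrite ?Hm; try reflexivity.
    rewrite <- Hc, Hm; reflexivity.
Qed.

Lemma Gf_iso_of_shift (c : G) :
  (forall x y, f2 (x ** y) = f2 x ** f2 y) ->
  (forall x, f1 x = f2 x ** f2 (c ** c)) ->
  magma_isomorphic (Gf_mul f1) (Gf_mul f2).
Proof.
  intros Hm Hf1.
  exists (fun a => match a with inl x => inl x | inr x => inr (x ** c) end).
  split.
  - exists (fun a => match a with inl x => inl x | inr x => inr (x ** ginv G c) end).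
    split; intros [x|x]; try reflexivity; f_equal;
      rewrite <- gmul_assoc, ?gmul_Vl, ?gmul_Vr, gmul_1r; reflexivity.
  - intros [x|x] [y|y]; simpl; f_equal.
    + symmetry; apply gmul_assoc.
    + rewrite <- !gmul_assoc; f_equal; apply gmul_comm.
    + rewrite Hf1, <- Hm. f_equal.
      rewrite <- !gmul_assoc; f_equal; apply gmul_CA.
Qed.

Section SplitIso.
Variables (psi chi : G -> G) (phi : G + G -> G + G).
Hypothesis phi_inl : forall x, phi (inl x) = inl (psi x).
Hypothesis phi_inr : forall x, phi (inr x) = inr (chi x).
Hypothesis phi_mul : forall a b, phi (Gf_mul f1 a b) = Gf_mul f2 (phi a) (phi b).

Lemma split_iso_hom x y : psi (x ** y) = psi x ** psi y.
Proof.
  pose proof (phi_mul (inl x) (inl y)) as H. simpl in H.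
  rewrite !phi_inl in H. injection H as H. exact H.
Qed.

Lemma split_iso_unit : psi (gone G) = gone G.
Proof.
  symmetry. apply (gmul_cancel_l G (psi (gone G))).
  rewrite gmul_1r, <- split_iso_hom, gmul_1l; reflexivity.
Qed.

Lemma split_iso_bar x : chi x = psi x ** chi (gone G).
Proof.
  pose proof (phi_mul (inl x) (inr (gone G))) as H. simpl in H.
  rewrite gmul_1r, phi_inl, !phi_inr in H. injection H as H. exact H.
Qed.

Lemma split_iso_conj :
  f1 (gone G) = gone G -> f2 (gone G) = gone G ->
  (forall x y, f2 x = f2 y -> x = y) ->
  forall x, f2 (psi x) = psi (f1 x).
Proof.
  intros h1 h2 f2_inj.
  assert (Hkk : chi (gone G) ** chi (gone G) = gone G).
  { apply f2_inj. rewrite h2.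
    pose proof (phi_mul (inr (gone G)) (inr (gone G))) as H. simpl in H.
    rewrite gmul_1l, h1, phi_inl, split_iso_unit, !phi_inr in H.
    injection H as H. symmetry; exact H. }
  intro x. pose proof (phi_mul (inr x) (inr (gone G))) as H. simpl in H.
  rewrite gmul_1r, phi_inl, !phi_inr in H. simpl in H.
  rewrite (split_iso_bar x), <- gmul_assoc, Hkk, gmul_1r in H.
  injection H as H. symmetry; exact H.
Qed.

End SplitIso.

Lemma Gf_conj_of_iso (hf2 : bijective f2)
  (hng1 : ~ magma_is_group (Gf_mul f1)) (hng2 : ~ magma_is_group (Gf_mul f2)) :
  f1 (gone G) = gone G -> f2 (gone G) = gone G ->
  magma_isomorphic (Gf_mul f1) (Gf_mul f2) -> conj_in_aut f1 f2.
Proof.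
  intros h1 h2 [phi Hiso].
  destruct (magma_iso_inv _ _ _ Hiso) as [g [Hgiso [Hgphi Hphig]]].
  pose proof (Gf_iso_maps_G _ _ _ _ hng2 Hiso) as phi_inl.
  pose proof (Gf_iso_maps_G _ _ _ _ hng1 Hgiso) as g_inl.
  (* phi^-1 maps G into G, so phi cannot send a barred element into G. *)
  assert (phi_inr : forall x, phi (inr x) = inr (strip (phi (inr x)))).
  { intro x. destruct (phi (inr x)) as [y|y] eqn:E; [|reflexivity].
    exfalso. pose proof (g_inl y) as Hy. rewrite <- E, Hgphi in Hy. discriminate Hy. }
  set (psi := fun x => strip (phi (inl x))).
  assert (f2_inj : forall x y, f2 x = f2 y -> x = y).
  { destruct hf2 as [f2_inv [Hl _]]. intros x y H.
    rewrite <- (Hl x), <- (Hl y), H; reflexivity. }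
  exists psi. split; [split|].
  - exists (fun x => strip (g (inl x))). split; intro x.
    + pose proof (Hgphi (inl x)) as H. rewrite phi_inl, g_inl in H.
      injection H as H. exact H.
    + pose proof (Hphig (inl x)) as H. rewrite g_inl, phi_inl in H.
      injection H as H. exact H.
  - exact (split_iso_hom _ _ phi_inl (proj2 Hiso)).
  - exact (split_iso_conj _ _ _ phi_inl phi_inr (proj2 Hiso) h1 h2 f2_inj).
Qed.

End Isomorphisms.

Theorem corollary2p6 (G : CommGroup) (f1 f2 : G -> G)
  (hf1 : bijective f1) (hf2 : bijective f2)
  (hng1 : ~ magma_is_group (Gf_mul f1)) (hng2 : ~ magma_is_group (Gf_mul f2)) :
  (conj_in_aut f1 f2 -> magma_isomorphic (Gf_mul f1) (Gf_mul f2)) /\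
  (f1 (gone G) = gone G -> f2 (gone G) = gone G ->
     (magma_isomorphic (Gf_mul f1) (Gf_mul f2) <-> conj_in_aut f1 f2)) /\
  (forall t : G, @is_aut G f2 -> (exists s : G, t = gmul G s s) ->
     (forall x, f1 x = gmul G (f2 x) t) ->
     magma_isomorphic (Gf_mul f1) (Gf_mul f2)).
Proof.
  split; [|split].
  - apply Gf_iso_of_conj.
  - intros h1 h2. split.
    + exact (Gf_conj_of_iso _ _ _ hf2 hng1 hng2 h1 h2).
    + apply Gf_iso_of_conj.
  - (* t = s s = f2 (c c) with c = f2^-1 s. *)
    intros t [[f2_inv [_ Hr]] Hm] [s Hs] Hf1.
    apply (Gf_iso_of_shift _ _ _ (f2_inv s) Hm).
    intro x. rewrite Hf1, Hs, Hm, Hr; reflexivity.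
Qed.
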